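(* Let $G_4$ be the directed graph whose vertex set is $S_4$ (permutations in one-line notation $[u(1),u(2),u(3),u(4)]$), with a directed edge $\mathbf{u}\to\mathbf{v}$ if and only if $\max_{i\in\{1,2,3,4\}}\bigl(v^{-1}(i)-u^{-1}(i)\bigr)=1$. Let $g=(1,2,3,4)\in S_4$ (cycle notation) and $H=\langle g\rangle=\{[1,2,3,4],[2,3,4,1],[3,4,1,2],[4,1,2,3]\}$. Partition $S_4$ into the 6 cosets $\mathbf{h}H=\{\mathbf{h}\circ g^k : k=0,1,2,3\}$, where $(\mathbf{h}\circ g)(i)=h(g(i))$; concretely, the coset of $[a,b,c,d]$ is $\{[a,b,c,d],[b,c,d,a],[c,d,a,b],[d,a,b,c]\}$. Then each of these 6 sets is a dominating set of $G_4$, i.e., for each such set $D$, every vertex $\mathbf{u}\notin D$ has an edge $\mathbf{u}\to\mathbf{v}$ to some $\mathbf{v}\in D$.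
   Context: For a permutation $\mathbf{u}=[u(1),\dots,u(n)]$ in one-line notation, $u^{-1}(i)$ denotes the position of $i$ in the sequence. The quantity $\max_i(v^{-1}(i)-u^{-1}(i))$ is the rewriting cost of changing state $\mathbf{u}$ to state $\mathbf{v}$ via minimal-push-up operations. A set $D$ of vertices of a directed graph is a dominating set if every vertex not in $D$ is the initial vertex of an edge ending in a vertex of $D$. *)

From mathcomp Require Import all_boot all_order all_algebra all_fingroup.
Set Implicit Arguments. Unset Strict Implicit. Unset Printing Implicit Defensive.
Import GRing.Theory Num.Theory.

(* Permutations of {1,2,3,4} are modelled as 'S_4 = {perm 'I_4}, i.e. values and
   positions are shifted to {0,1,2,3}; differences of positions are unaffected. *)

Definition pos (u : 'S_4) (i : 'I_4) : int := (nat_of_ord ((u^-1)%g i))%:Z.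

Definition cost (u v : 'S_4) : int :=
  \big[Num.max/(pos v ord0 - pos u ord0)%R]_(i < 4) (pos v i - pos u i)%R.

Definition G4edge (u v : 'S_4) : bool := cost u v == 1%R.

Definition dominating (D : {set 'S_4}) : Prop :=
  forall u : 'S_4, u \notin D -> exists2 v : 'S_4, v \in D & G4edge u v.

(* g = (1,2,3,4) in cycle notation: i |-> i+1 (mod 4) *)
Definition g4 : 'S_4 := perm (@ordS_inj 4).

(* coset hH = { h o g^k : k = 0..3 }; in mathcomp (s * t) x = t (s x),
   so h o g^k is (g ^+ k * h). *)
Definition coset4 (h : 'S_4) : {set 'S_4} :=
  [set ((g4 ^+ k) * h)%g | k : 'I_4].

From mathcomp Require Import all_boot all_order all_algebra all_fingroup zify.

Set Implicit Arguments.
Unset Strict Implicit.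

(* The one-line word of h g^k is the k-th cyclic rotation of the word of h,
   and the rewriting cost only depends on the words of its two arguments.
   The claim thus reduces to a statement about the 24 arrangements of
   0, 1, 2, 3, which is decided by computation.  It even holds in the
   stronger form that every vertex, inside the coset or not, has an edge into
   it. *)

Lemma nth_rot (T : Type) (x0 : T) (s : seq T) (k i : nat) :
  k <= size s -> i < size s -> nth x0 (rot k s) i = nth x0 s ((i + k) %% size s).
Proof.
move=> k_le i_lt; rewrite /rot nth_cat size_drop.
case: ltnP => [i_lt_rest | i_ge_rest].
  by rewrite nth_drop modn_small addnC //; lia.
have -> : i + k = (i - (size s - k)) + size s by lia.
by rewrite modnDr modn_small ?nth_take //; lia.
Qed.

Section OneLineWord.

Variable n : nat.

Definition word (s : 'S_n) : seq nat := [seq s i : nat | i <- enum 'I_n].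

Lemma size_word (s : 'S_n) : size (word s) = n.
Proof. by rewrite size_map size_enum_ord. Qed.

Lemma nth_word (s : 'S_n) (i : 'I_n) : nth 0 (word s) i = s i.
Proof. by rewrite (nth_map i) ?size_enum_ord // nth_ord_enum. Qed.

Lemma index_word (s : 'S_n) (i : 'I_n) : index (i : nat) (word s) = (s^-1)%g i.
Proof.
rewrite -[in index _](permKV s i) -[nat_of_ord (s _)]/((@nat_of_ord n \o s) _).
by rewrite index_map ?index_enum_ord //; apply: inj_comp val_inj (@perm_inj _ s).
Qed.

Lemma word_perm_iota (s : 'S_n) : word s \in permutations (iota 0 n).
Proof.
have s_enum : perm_eq (map s (enum 'I_n)) (enum 'I_n).
  apply: uniq_perm; first by rewrite (map_inj_uniq (@perm_inj _ s)) enum_uniq.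
    exact: enum_uniq.
  by move=> i; rewrite mem_enum; apply/mapP; exists ((s^-1)%g i); rewrite ?mem_enum ?permKV.
by rewrite mem_permutations -val_enum_ord /word map_comp perm_map.
Qed.

Definition cycle_perm : 'S_n := perm (@ordS_inj n).

Lemma cycle_permX (k : nat) (i : 'I_n) : (cycle_perm ^+ k)%g i = (i + k) %% n :> nat.
Proof.
elim: k => [|k IHk]; first by rewrite expg0 perm1 addn0 modn_small.
by rewrite expgSr permM permE /= IHk -addn1 modnDml -addnA addn1.
Qed.

Lemma word_cycle_permX (h : 'S_n) (k : nat) :
  k <= n -> word ((cycle_perm ^+ k) * h)%g = rot k (word h).
Proof.
move=> k_le; apply: (@eq_from_nth _ 0); first by rewrite size_rot !size_word.
move=> j; rewrite size_word => j_lt.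
rewrite nth_rot ?size_word //.
have -> : (j + k) %% n = (cycle_perm ^+ k)%g (Ordinal j_lt) by rewrite cycle_permX.
by rewrite -[j]/(nat_of_ord (Ordinal j_lt)) !nth_word permM.
Qed.

End OneLineWord.

Local Open Scope ring_scope.

Definition displacement (L M : seq nat) (x : nat) : int :=
  (index x M)%:Z - (index x L)%:Z.

(* A fold rather than a big operator: [bigop] is locked and would block [vm_compute]. *)
Definition word_cost (n : nat) (L M : seq nat) : int :=
  foldr Num.max (displacement L M 0) [seq displacement L M x | x <- iota 0 n].

Lemma word_costE (n : nat) (L M : seq nat) :
  word_cost n L M = \big[Num.max/displacement L M 0]_(i < n) displacement L M i.
Proof.
rewrite /word_cost.
have -> : iota 0 n = index_iota 0 n by rewrite /index_iota subn0.
by rewrite foldrE big_map big_mkord.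
Qed.

Lemma cost_word (u v : 'S_4) : cost u v = word_cost 4 (word u) (word v).
Proof.
rewrite word_costE /cost /pos -!index_word.
by under eq_bigr => i _ do rewrite -!index_word.
Qed.

Definition rotations (s : seq nat) : seq (seq nat) := [seq rot k s | k <- iota 0 (size s)].

Lemma words4_cost1_to_rotations :
  all (fun L => all (fun H => has (fun M => word_cost 4 L M == 1) (rotations H))
                    (permutations (iota 0 4)))
      (permutations (iota 0 4)).
Proof. by vm_compute. Qed.

Theorem theorem3 : forall h : 'S_4, dominating (coset4 h).
Proof.
move=> h u _.
have /allP/(_ _ (word_perm_iota u))/allP/(_ _ (word_perm_iota h)) := words4_cost1_to_rotations.
case/hasP=> _ /mapP[k k_in ->] cost1.
have k_lt : (k < 4)%N by move: k_in; rewrite size_word mem_iota.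
exists (g4 ^+ k * h)%g; first by apply/imsetP; exists (Ordinal k_lt).
by rewrite /G4edge cost_word word_cycle_permX // ltnW.
Qed.
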